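(* Let $\mathbb{X}$ be a discrete group with identity $\circ$, let $\mu$ be a finitely supported probability measure on $\mathbb{X}$ satisfying (A1) $\mu(xzx^{-1})=\mu(z)$ for all $x,z\in\mathbb{X}$ and (A2) $\mu(z)=\mu(z^{-1})$ for all $z\in\mathbb{X}$, and let $(X_t)_{t\ge0}$ be the continuous-time Markov chain on $\mathbb{X}$ started at $X_0=\circ$ with generator $(Lf)(x)=\sum_{z\in\mathbb{X}}\mu(z)(f(xz)-f(x))$. Fix a function $f\colon\mathbb{X}\to\mathbb{R}$ and a time $t\ge 0$. If $\mathbb{E}[\Gamma f(X_t)]<\infty$, then $\mathbb{E}[f^2(X_t)]<\infty$ and $$\mathrm{Var}[f(X_t)]\le 2t\,\mathbb{E}[\Gamma f(X_t)].$$
   Context: Here $\Gamma f(x):=\frac12\sum_{z\in\mathbb{X}}\mu(z)\left(f(xz)-f(x)\right)^2$ (the carré du champ $\Gamma(f)=\frac12[L(f^2)-2fLf]$ of $L$, extended to arbitrary, possibly unbounded, $f$ by this formula). *)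

From HB Require Import structures.
From mathcomp Require Import all_boot all_order all_algebra.
From mathcomp Require Import all_classical all_reals all_analysis.
From Stdlib Require List.
Set Implicit Arguments. Unset Strict Implicit. Unset Printing Implicit Defensive.
Import Order.TTheory GRing.Theory Num.Theory.
Local Open Scope ring_scope.

Record is_group (G : Type) (mul : G -> G -> G) (one : G) (inv : G -> G) : Prop := {
  grp_assoc : forall x y z, mul x (mul y z) = mul (mul x y) z;
  grp_mul1 : forall x, mul one x = x;
  grp_mul1r : forall x, mul x one = x;
  grp_mulV : forall x, mul (inv x) x = one;
  grp_mulVr : forall x, mul x (inv x) = one }.

Section Chain.
Variables (R : realType) (G : Type) (mul : G -> G -> G) (one : G) (mu : G -> R)
  (s : seq G) (* a finite list containing the support of mu *).

Definition Gamma (f : G -> R) (x : G) : R :=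
  2^-1 * \sum_(z <- s) mu z * (f (mul x z) - f x) ^+ 2.

Fixpoint Kpow (n : nat) (g : G -> \bar R) (x : G) : \bar R :=
  match n with
  | O => g x
  | n'.+1 => (\sum_(z <- s) (mu z)%:E * Kpow n' g (mul x z))%E
  end.

(* Markov semigroup P_t = e^{tL} = sum_n e^{-t} t^n/n! K^n  (L = K - I), applied
   to a nonnegative function: this is E_x[g(X_t)] in [0, +oo]. *)
Definition Pt (t : R) (g : G -> \bar R) (x : G) : \bar R :=
  (\sum_(0 <= n <oo) ((expR (- t) * t ^+ n / (n`!)%:R)%:E * Kpow n g x))%E.

Definition Enn (t : R) (g : G -> R) : \bar R := Pt t (fun x => (g x)%:E) one.

Definition Esgn (t : R) (f : G -> R) : R :=
  fine (Enn t (fun x => Num.max (f x) 0)) - fine (Enn t (fun x => Num.max (- f x) 0)).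

Definition Var (t : R) (f : G -> R) : R :=
  fine (Enn t (fun x => (f x - Esgn t f) ^+ 2)).

End Chain.

From mathcomp Require Import all_boot all_order all_algebra.
From mathcomp Require Import all_classical all_reals all_analysis.
From Stdlib Require List.
From mathcomp Require Import ring lra.
From Stdlib Require Permutation FinFun.
Import Order.TTheory GRing.Theory Num.Theory.
Import numFieldNormedType.Exports.
Local Open Scope ring_scope.
Local Open Scope classical_set_scope.

(* X_t is the discrete walk S_n (kernel K g x = sum_z mu(z) g(xz)) observed at an
   independent Poisson(t) time N. Conditioning on N splits Var f(X_t) into
   E[Var f(S_N)] + Var b(N), where b n = E f(S_n).
   Conjugation invariance of mu gives Gamma (K g) <= K (Gamma g); iterating the one-step
   identity K(g^2) - (K g)^2 = 2 Gamma g - (K g - g)^2 then yields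
   Var f(S_(n+1)) <= (n+1) (2 E Gamma f(S_n) - (b (n+1) - b n)^2).
   The Poisson Poincare inequality Var b(N) <= t E[(b (N+1) - b N)^2] bounds the second
   term, and since (n+1) p_(n+1) = t p_n for the Poisson weights, the two
   (b (n+1) - b n)^2 contributions cancel, leaving 2 t E Gamma f(X_t). *)

Section ListSums.
Variables (R : nmodType) (T : Type).

Lemma big_Permutation (F : T -> R) (l1 l2 : seq T) :
  Permutation.Permutation l1 l2 -> \sum_(z <- l1) F z = \sum_(z <- l2) F z.
Proof.
elim=> [//|x l l' _ IH|x y l|l l' l'' _ IH1 _ IH2]; rewrite ?big_cons.
- by rewrite IH.
- by rewrite addrCA.
- by rewrite IH1.
Qed.

Lemma big_NoDup_support (F : T -> R) (l1 l2 : seq T) :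
  List.NoDup l1 -> List.NoDup l2 ->
  (forall v, F v != 0 -> List.In v l1 /\ List.In v l2) ->
  \sum_(z <- l1) F z = \sum_(z <- l2) F z.
Proof.
move=> l1_uniq l2_uniq supp; pose nz z := F z != 0.
have drop0 l : \sum_(z <- l) F z = \sum_(z <- List.filter nz l) F z.
  by rewrite [RHS]big_filter [LHS](bigID nz) /= [X in _ + X]big1 ?addr0 // => z /negPn/eqP.
rewrite drop0 [RHS]drop0; apply/big_Permutation/Permutation.NoDup_Permutation;
  try exact: List.NoDup_filter.
by move=> z; rewrite !List.filter_In; split=> -[_ nzz]; split=> //; have [] := supp z nzz.
Qed.
End ListSums.

Lemma double_sum_sym (R : comPzRingType) (F : nat -> nat -> R) N :
  (forall i j, F i j = F j i) -> (forall i, F i i = 0) ->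
  \sum_(0 <= i < N) \sum_(0 <= j < N) F i j =
  2 * \sum_(0 <= j < N) \sum_(0 <= i < j) F i j.
Proof.
move=> Fsym F0; elim: N => [|N IH]; first by rewrite !big_geq // mulr0.
rewrite !big_nat_recr //= F0 addr0.
under eq_bigr do rewrite big_nat_recr //=.
rewrite big_split /= IH.
have -> : \sum_(0 <= j < N) F N j = \sum_(0 <= i < N) F i N by apply: eq_bigr => i _; rewrite Fsym.
ring.
Qed.

Lemma sqr_sum_le (R : realFieldType) (I : Type) (r : seq I) (x : I -> R) :
  (\sum_(i <- r) x i) ^+ 2 <= (size r)%:R * \sum_(i <- r) x i ^+ 2.
Proof.
elim: r => [|y r IH]; first by rewrite !big_nil expr0n mul0r.
case: r IH => [|z r] IH; first by rewrite !big_seq1 mul1r.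
rewrite !big_cons in IH *; rewrite [size _]/= -natr1.
set S := x z + _ in IH *; set T := x z ^+ 2 + _ in IH *; set n := _%:R in IH *.
have n_gt0 : 0 < n by rewrite ltr0n.
suff : 0 <= n * ((n + 1) * (x y ^+ 2 + T) - (x y + S) ^+ 2) by rewrite pmulr_rge0 // subr_ge0.
have -> : n * ((n + 1) * (x y ^+ 2 + T) - (x y + S) ^+ 2) =
  (n * x y - S) ^+ 2 + (n + 1) * (n * T - S ^+ 2) by ring.
by apply: addr_ge0; [exact: sqr_ge0 | apply: mulr_ge0; lra].
Qed.

Lemma sqr_sub_le_telescope (R : realFieldType) (b : nat -> R) i j : (i <= j)%N ->
  (b j - b i) ^+ 2 <= (j - i)%:R * \sum_(i <= k < j) (b k.+1 - b k) ^+ 2.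
Proof.
move=> ij; rewrite -telescope_sumr // -[in X in X%:R](size_iota i (j - i)).
exact: sqr_sum_le.
Qed.

Lemma sum_mul_sum_tail (R : comPzRingType) (c e : nat -> R) N :
  \sum_(0 <= i < N) c i * \sum_(i <= k < N) e k =
  \sum_(0 <= k < N) e k * \sum_(0 <= i < k.+1) c i.
Proof.
elim: N => [|N IH]; first by rewrite !big_geq.
rewrite big_nat_recr //= [RHS]big_nat_recr //= big_nat1.
rewrite (eq_big_nat _ _ (F2 := fun i => c i * \sum_(i <= k < N) e k + c i * e N)).
  by rewrite big_split /= IH -big_distrl /= big_nat_recr //=; ring.
by move=> i /andP [_ iN]; rewrite big_nat_recr ?mulrDr // ltnW.
Qed.

Definition cross_weight {R : nmodType} (c : nat -> nat -> R) k N :=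
  \sum_(k.+1 <= j < N) \sum_(0 <= i < k.+1) c i j.

Lemma sum_interval_exchange (R : comPzRingType) (c : nat -> nat -> R) (e : nat -> R) N :
  \sum_(0 <= j < N) \sum_(0 <= i < j) c i j * \sum_(i <= k < j) e k =
  \sum_(0 <= k < N) e k * cross_weight c k N.
Proof.
elim: N => [|N IH]; first by rewrite !big_geq.
rewrite big_nat_recr //= IH sum_mul_sum_tail big_nat_recr //=.
rewrite /cross_weight [X in _ * X]big_geq // mulr0 addr0 -big_split /=.
apply: eq_big_nat => k /andP [_ kN].
by rewrite (big_nat_recr N k.+1) // mulrDr.
Qed.

(** * The Poisson Poincare inequality *)

Lemma cvg_series_lincomb {R : realType} (u v : nat -> R) (a b lu lv : R) :
  series u @ \oo --> lu -> series v @ \oo --> lv ->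
  series (fun n => a * u n + b * v n) @ \oo --> a * lu + b * lv.
Proof.
move=> ulim vlim.
have -> : series (fun n => a * u n + b * v n) = (fun N => a * series u N + b * series v N).
  by apply/funext => N; rewrite /series /= big_split /= -!mulr_sumr.
by apply: cvgD; apply: cvgM => //; exact: cvg_cst.
Qed.

Lemma nneseries_EFin {R : realType} {u : nat -> R} {l : R} : (forall n, 0 <= u n) ->
  series u @ \oo --> l -> (\sum_(n <oo) (u n)%:E = l%:E)%E.
Proof.
move=> u_ge0 ulim; have u_cvg : cvgn (series u) by apply/cvg_ex; exists l.
rewrite -(cvg_lim _ ulim) // -EFin_lim //; apply: congr_lim; apply/funext => n /=.
by rewrite sumEFin.
Qed.

Lemma nneseries_shift {R : realType} (u : nat -> \bar R) : (forall n, 0 <= u n)%E ->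
  u 0%N = 0%E -> (\sum_(n <oo) u n = \sum_(n <oo) u n.+1)%E.
Proof.
move=> u_ge0 u0; rewrite nneseries_recl // u0 add0e -nneseries_addn //.
by apply: eq_eseriesr => n _; rewrite addn1.
Qed.

Lemma cvg_series_fine {R : realType} (u : nat -> R) : (forall n, 0 <= u n) ->
  (\sum_(n <oo) (u n)%:E < +oo)%E -> series u @ \oo --> fine (\sum_(n <oo) (u n)%:E)%E.
Proof.
move=> u_ge0 u_fin; have u_cvg := nnseries_is_cvg u_ge0 u_fin.
by rewrite (nneseries_EFin u_ge0 u_cvg).
Qed.

Definition poisson {R : realType} (t : R) n : R := expR (- t) * t ^+ n / n`!%:R.

Section PoissonWeights.
Context {R : realType} {t : R}.
Hypothesis t_ge0 : 0 <= t.

Local Notation p := (poisson t).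

Lemma poisson_ge0 n : 0 <= p n.
Proof. by rewrite /poisson !mulr_ge0 ?expR_ge0 ?exprn_ge0 ?invr_ge0. Qed.

Lemma mul_poisson_ge0 n x : 0 <= x -> 0 <= p n * x.
Proof. exact/mulr_ge0/poisson_ge0. Qed.

Lemma poisson0_gt0 : 0 < p 0.
Proof. by rewrite /poisson expr0 mulr1 fact0 invr1 mulr1 expR_gt0. Qed.

Lemma poissonS n : n.+1%:R * p n.+1 = t * p n.
Proof.
rewrite /poisson factS natrM exprS.
have fact_neq0 : n`!%:R != 0 :> R by rewrite pnatr_eq0 -lt0n fact_gt0.
by field; rewrite fact_neq0 nat1r pnatr_eq0.
Qed.

Lemma cvg_series_poisson : series p @ \oo --> (1 : R).
Proof.
have -> : series p = (fun N => expR (- t) * series (exp_coeff t) N).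
  apply/funext => N; rewrite /series /= mulr_sumr.
  by apply: eq_bigr => n _; rewrite /poisson /exp_coeff /= mulrA.
have <- : expR (- t) * expR t = 1 by rewrite -expRD addNr expR0.
apply: cvgM; first exact: cvg_cst.
exact: is_cvg_series_exp_coeff.
Qed.

Lemma nneseries_poisson : (\sum_(n <oo) (p n)%:E = 1%:E)%E.
Proof. exact: nneseries_EFin poisson_ge0 cvg_series_poisson. Qed.

Lemma sum_poisson_le1 N : \sum_(0 <= k < N) p k <= 1.
Proof.
rewrite -lee_fin -sumEFin -nneseries_poisson.
by apply: nneseries_lim_ge => n _ _; rewrite lee_fin poisson_ge0.
Qed.

Lemma sum_nat_mul_poisson k :
  \sum_(0 <= i < k.+1) i%:R * p i = t * \sum_(0 <= i < k) p i.
Proof.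
elim: k => [|k IH]; first by rewrite big_nat1 big_geq // mul0r mulr0.
by rewrite big_nat_recr //= IH poissonS [in RHS]big_nat_recr //= mulrDr.
Qed.

(* [cross_weight cw k N] truncates sum_(i <= k < j) p_i p_j (j - i), which is t p_k. *)
Let cw i j := p i * p j * (j%:R - i%:R).

Lemma cross_weight_poissonE k m : cross_weight cw k (k.+1 + m) =
  t * (p k * \sum_(0 <= j < k.+1 + m) p j -
       \sum_(0 <= i < k.+1) p i * p (k + m)).
Proof.
elim: m => [|m IH].
  by rewrite /cross_weight addn0 big_geq // addn0 -big_distrl /=; ring.
rewrite /cross_weight addnS big_nat_recr ?leq_addr //= -/(cross_weight cw k (k.+1 + m)) IH.
have -> : \sum_(0 <= i < k.+1) cw i (k.+1 + m) =
    (k.+1 + m)%:R * p (k.+1 + m) * \sum_(0 <= i < k.+1) p i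
    - p (k.+1 + m) * \sum_(0 <= i < k.+1) i%:R * p i.
  by rewrite !mulr_sumr -sumrB; apply: eq_bigr => i _; rewrite /cw; ring.
rewrite sum_nat_mul_poisson addSn poissonS addnS -!big_distrl /=.
rewrite (big_nat_recr (k + m).+1) // !(big_nat_recr k 0 p) //=.
ring.
Qed.

Lemma cross_weight_poisson_le k N : (k < N)%N -> cross_weight cw k N <= t * p k.
Proof.
move=> kN; rewrite -(subnKC kN) cross_weight_poissonE.
set S := \sum_(0 <= j < _) p j.
have S_le1 : S <= 1 by apply: sum_poisson_le1.
set T := \sum_(0 <= i < k.+1) _.
have T_ge0 : 0 <= T by apply: sumr_ge0 => i _; rewrite mul_poisson_ge0 ?poisson_ge0.
rewrite ler_wpM2l //; have := ler_wpM2l (poisson_ge0 k) S_le1; lra.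
Qed.

Lemma poisson_poincare_partial (b : nat -> R) N :
  \sum_(0 <= i < N) \sum_(0 <= j < N) p i * p j * (b i - b j) ^+ 2 <=
  2 * t * \sum_(0 <= k < N) p k * (b k.+1 - b k) ^+ 2.
Proof.
rewrite double_sum_sym; last 2 first.
- by move=> i j; ring.
- by move=> i; rewrite subrr expr0n /= mulr0.
set e := fun k => (b k.+1 - b k) ^+ 2.
have e_ge0 k : 0 <= e k by exact: sqr_ge0.
have cauchy_schwarz : \sum_(0 <= j < N) \sum_(0 <= i < j) p i * p j * (b i - b j) ^+ 2 <=
    \sum_(0 <= j < N) \sum_(0 <= i < j) cw i j * \sum_(i <= k < j) e k.
  apply: ler_sum => j _; apply: ler_sum_nat => i /andP [_ ij].
  rewrite /cw -[X in _ <= X]mulrA; apply: ler_wpM2l; first by rewrite mulr_ge0 ?poisson_ge0.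
  by rewrite -sqrrN opprB -natrB ?sqr_sub_le_telescope // ltnW.
rewrite -[X in _ <= X]mulrA ler_pM2l //; apply: (le_trans cauchy_schwarz).
rewrite sum_interval_exchange mulr_sumr; apply: ler_sum_nat => k /andP [_ kN].
by have := ler_wpM2l (e_ge0 k) (cross_weight_poisson_le _ _ kN); rewrite /e; lra.
Qed.

Lemma poisson_poincare (b : nat -> R) :
  (\sum_(i <oo) \sum_(j <oo) (p i * p j * (b i - b j) ^+ 2)%:E <=
   (2 * t)%:E * \sum_(k <oo) (p k * (b k.+1 - b k) ^+ 2)%:E)%E.
Proof.
set F := fun i j => p i * p j * (b i - b j) ^+ 2.
have F_ge0 i j : 0 <= F i j by rewrite mulr_ge0 ?sqr_ge0 // mulr_ge0 ?poisson_ge0.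
have e_ge0 k : 0 <= p k * (b k.+1 - b k) ^+ 2 by rewrite mul_poisson_ge0 ?sqr_ge0.
set D := ((2 * t)%:E * _)%E.
have square_le N : ((\sum_(0 <= j < N) \sum_(0 <= i < N) F i j)%:E <= D)%E.
  rewrite exchange_big /=.
  apply: (@le_trans _ _ (2 * t * \sum_(0 <= k < N) p k * (b k.+1 - b k) ^+ 2)%:E).
    by rewrite lee_fin poisson_poincare_partial.
  rewrite EFinM lee_wpmul2l ?lee_fin ?mulr_ge0 // -sumEFin.
  by apply: nneseries_lim_ge => k _ _; rewrite lee_fin.
have rectangle_le N M : (\sum_(0 <= j < M) \sum_(0 <= i < N) (F i j)%:E <= D)%E.
  under eq_bigr do rewrite sumEFin.
  rewrite sumEFin (le_trans _ (square_le (maxn N M))) // lee_fin.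
  apply: (@le_trans _ _ (\sum_(0 <= j < M) \sum_(0 <= i < maxn N M) F i j)).
    apply: ler_sum => j _.
    exact: (nondecreasing_series (fun i _ _ => F_ge0 i j) (leq_maxl N M)).
  apply: (nondecreasing_series _ (leq_maxr N M)) => j _ _.
  by apply: sumr_ge0 => i _.
apply: lime_le.
  by apply: is_cvg_nneseries => n _ _; apply: nneseries_ge0 => j _ _; rewrite lee_fin F_ge0.
apply: nearW => N; rewrite -nneseries_sum_nat; last by move=> i j; rewrite lee_fin F_ge0.
apply: lime_le.
  by apply: is_cvg_nneseries => n _ _; apply: sume_ge0 => j _; rewrite lee_fin F_ge0.
exact: nearW.
Qed.

Lemma poisson_sqr_summable (b : nat -> R) :
  (\sum_(n <oo) (p n * (b n.+1 - b n) ^+ 2)%:E < +oo)%E ->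
  (\sum_(n <oo) (p n * b n ^+ 2)%:E < +oo)%E.
Proof.
move=> grad_fin; set X := (\sum_(n <oo) (p n * (b n - b 0%N) ^+ 2)%:E)%E.
have dev_ge0 n : 0 <= p n * (b n - b 0%N) ^+ 2 by rewrite mul_poisson_ge0 ?sqr_ge0.
have F_ge0 i j : (0 <= (p i * p j * (b i - b j) ^+ 2)%:E)%E.
  by rewrite lee_fin mulr_ge0 ?sqr_ge0 // mulr_ge0 ?poisson_ge0.
have row0_le : ((p 0)%:E * X <= \sum_(i <oo) \sum_(j <oo)
    (p i * p j * (b i - b j) ^+ 2)%:E)%E.
  rewrite -nneseriesZl; last by move=> n _; rewrite lee_fin.
  apply: le_trans (@nneseries_lim_ge _ _ xpredT 0%N 1%N _); last first.
    by move=> i _ _; apply: nneseries_ge0.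
  rewrite big_nat1.
  apply: lee_nneseries => j _; first by rewrite mule_ge0 ?lee_fin ?poisson_ge0.
  by rewrite -EFinM lee_fin mulrA -sqrrN opprB.
have X_fin : (X < +oo)%E.
  have p0_neq0 : p 0 != 0 by rewrite gt_eqF ?poisson0_gt0.
  rewrite -[X]mul1e -(mulVf p0_neq0) EFinM -muleA lte_mul_pinfty ?lee_fin ?invr_ge0 ?poisson_ge0 //.
  apply: le_lt_trans row0_le _; apply: le_lt_trans (poisson_poincare b) _.
  by rewrite lte_mul_pinfty ?lee_fin ?mulr_ge0.
apply: (@le_lt_trans _ _ (\sum_(n <oo)
    (2%:E * (p n * (b n - b 0%N) ^+ 2)%:E + (2 * b 0%N ^+ 2)%:E * (p n)%:E))%E).
  apply: lee_nneseries => n _; first by rewrite lee_fin mul_poisson_ge0 ?sqr_ge0.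
  rewrite -!EFinM -EFinD lee_fin -subr_ge0.
  have -> : 2 * (p n * (b n - b 0%N) ^+ 2) + 2 * b 0%N ^+ 2 * p n - p n * b n ^+ 2 =
    p n * (b n - 2 * b 0%N) ^+ 2 by ring.
  by rewrite mul_poisson_ge0 ?sqr_ge0.
rewrite nneseriesD => [|n _ _|n _ _]; last 2 first.
- by rewrite mule_ge0 ?lee_fin.
- by rewrite mule_ge0 ?lee_fin ?poisson_ge0 // mulr_ge0 ?sqr_ge0.
rewrite !nneseriesZl => [|n _|n _]; last 2 first.
- by rewrite lee_fin poisson_ge0.
- by rewrite lee_fin.
by rewrite nneseries_poisson mule1; apply: lte_add_pinfty; [exact: lte_mul_pinfty | exact: ltry].
Qed.

Lemma is_cvg_series_poisson_mean (b : nat -> R) :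
  (\sum_(n <oo) (p n * b n ^+ 2)%:E < +oo)%E -> cvgn (series (fun n => p n * b n)).
Proof.
move=> sqr_fin; apply: normed_cvg.
have sqr_cvg : cvgn (series (fun n => p n * b n ^+ 2)).
  by apply: nnseries_is_cvg sqr_fin => n; rewrite mul_poisson_ge0 ?sqr_ge0.
apply: (series_le_cvg (v_ := fun n => 1 * (p n * b n ^+ 2) + 1 * p n)) => [n|n|n|].
- exact: normr_ge0.
- by rewrite !mul1r addr_ge0 ?poisson_ge0 ?mul_poisson_ge0 ?sqr_ge0.
- rewrite /= normrM ger0_norm ?poisson_ge0 // !mul1r -{3}[p n]mulr1 -mulrDr.
  apply: ler_wpM2l; first exact: poisson_ge0.
  rewrite -(real_normK (num_real (b n))).
  by have := sqr_ge0 (`|b n| - 1); have := normr_ge0 (b n); nra.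
- by apply/cvg_ex; eexists; exact: cvg_series_lincomb sqr_cvg cvg_series_poisson.
Qed.

Lemma poisson_variance_le (b : nat -> R) :
  (\sum_(n <oo) (p n * b n ^+ 2)%:E < +oo)%E ->
  (\sum_(n <oo) (p n * (b n - limn (series (fun k => p k * b k))) ^+ 2)%:E <=
   t%:E * \sum_(n <oo) (p n * (b n.+1 - b n) ^+ 2)%:E)%E.
Proof.
move=> sqr_fin; set m := limn (series _).
pose S2 := limn (series (fun n => p n * b n ^+ 2)).
have sqr_lim : series (fun n => p n * b n ^+ 2) @ \oo --> S2.
  by apply: nnseries_is_cvg sqr_fin => n; rewrite mul_poisson_ge0 ?sqr_ge0.
have mean_lim : series (fun n => p n * b n) @ \oo --> m.
  exact: is_cvg_series_poisson_mean sqr_fin.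
have dev_lim c : series (fun n => p n * (b n - c) ^+ 2) @ \oo --> S2 - 2 * c * m + c ^+ 2.
  have -> : S2 - 2 * c * m + c ^+ 2 = 1 * (1 * S2 + - (2 * c) * m) + c ^+ 2 * 1 by ring.
  have -> : (fun n => p n * (b n - c) ^+ 2) = (fun n =>
      1 * (1 * (p n * b n ^+ 2) + - (2 * c) * (p n * b n)) + c ^+ 2 * p n).
    by apply/funext => n; ring.
  apply: cvg_series_lincomb; last exact: cvg_series_poisson.
  exact: cvg_series_lincomb.
pose V := S2 - m ^+ 2.
have dev_ge0 c n : 0 <= p n * (b n - c) ^+ 2 by rewrite mul_poisson_ge0 ?sqr_ge0.
have devE : (\sum_(n <oo) (p n * (b n - m) ^+ 2)%:E = V%:E)%E.
  by rewrite (nneseries_EFin (dev_ge0 m) (dev_lim m)) /V; congr EFin; ring.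
have V_ge0 : 0 <= V by rewrite -lee_fin -devE; apply: nneseries_ge0 => n _ _; rewrite lee_fin.
have double_sumE : (\sum_(i <oo) \sum_(j <oo)
    (p i * p j * (b i - b j) ^+ 2)%:E = (2 * V)%:E)%E.
  have row i : (\sum_(j <oo) (p i * p j * (b i - b j) ^+ 2)%:E =
      (p i * V)%:E + (p i * (b i - m) ^+ 2)%:E)%E.
    transitivity ((p i)%:E * \sum_(j <oo) (p j * (b j - b i) ^+ 2)%:E)%E.
      rewrite -nneseriesZl => [|j _]; last by rewrite lee_fin.
      by apply: eq_eseriesr => j _; rewrite -EFinM; congr EFin; ring.
    rewrite (nneseries_EFin (dev_ge0 (b i)) (dev_lim (b i))) -!EFinM -EFinD.
    by congr EFin; rewrite /V; ring.
  rewrite (eq_eseriesr (fun i _ => row i)) nneseriesD => [|i _ _|i _ _]; last 2 first.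
  - by rewrite lee_fin mul_poisson_ge0.
  - by rewrite lee_fin.
  under eq_eseriesr do rewrite EFinM muleC.
  rewrite nneseriesZl => [|i _]; last by rewrite lee_fin poisson_ge0.
  by rewrite nneseries_poisson mule1 devE -EFinD; congr EFin; ring.
by have := poisson_poincare b; rewrite double_sumE devE !EFinM -muleA lee_pmul2l.
Qed.

End PoissonWeights.

(** * The jump operator and its carre du champ *)

Lemma jensen_sqr (R : realFieldType) (T : Type) (s : seq T) (w h : T -> R) :
  (forall z, 0 <= w z) -> \sum_(z <- s) w z = 1 ->
  (\sum_(z <- s) w z * h z) ^+ 2 <= \sum_(z <- s) w z * h z ^+ 2.
Proof.
move=> w_ge0 w_sum1.
have expand c : \sum_(z <- s) w z * (h z - c) ^+ 2 =
    \sum_(z <- s) w z * h z ^+ 2 - 2 * c * \sum_(z <- s) w z * h z +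
    c ^+ 2 * \sum_(z <- s) w z.
  rewrite !mulr_sumr -sumrB -big_split /=.
  by apply: eq_bigr => z _; ring.
have := expand (\sum_(z <- s) w z * h z); rewrite w_sum1.
have : 0 <= \sum_(z <- s) w z * (h z - \sum_(z <- s) w z * h z) ^+ 2.
  by apply: sumr_ge0 => z _; rewrite mulr_ge0 ?sqr_ge0.
lra.
Qed.

Lemma maxr0_sub_maxNr0 {R : realDomainType} (x : R) : Num.max x 0 - Num.max (- x) 0 = x.
Proof. by rewrite !maxEle oppr_le0; case: (lerP x 0); case: (lerP 0 x) => *; lra. Qed.

Lemma maxr0_le_sqrD1 {R : realDomainType} (x : R) : Num.max x 0 <= x ^+ 2 + 1.
Proof. by rewrite maxEle; case: (lerP x 0) => *; nra. Qed.

Definition Kr {R : realType} {G : Type} (mul : G -> G -> G) (mu : G -> R) (s : seq G)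
  (g : G -> R) (x : G) : R := \sum_(z <- s) mu z * g (mul x z).

Definition Krn {R : realType} {G : Type} (mul : G -> G -> G) (mu : G -> R) (s : seq G) n :=
  iter n (Kr mul mu s).

Section MarkovOperator.
Context {R : realType} {G : Type} {mul : G -> G -> G} {mu : G -> R} {s : seq G}.
Hypothesis mu_ge0 : forall z, 0 <= mu z.
Hypothesis mu_sum1 : \sum_(z <- s) mu z = 1.

Local Notation K := (Kr mul mu s).
Local Notation Kn := (Krn mul mu s).

Lemma Kr_affine a b e g h x :
  K (fun y => a * g y + b * h y + e) x = a * K g x + b * K h x + e.
Proof.
rewrite /Kr !mulr_sumr -[e in RHS]mul1r -mu_sum1 mulr_suml -!big_split /=.
by apply: eq_bigr => z _; ring.
Qed.

Lemma Krn_affine n a b e g h x :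
  Kn n (fun y => a * g y + b * h y + e) x = a * Kn n g x + b * Kn n h x + e.
Proof.
elim: n x => [//|n IH] x /=.
by rewrite -Kr_affine; apply: eq_bigr => z _; rewrite IH.
Qed.

Lemma Krn_cst n c x : Kn n (fun=> c) x = c.
Proof.
have -> : (fun=> c) = (fun y : G => 0 * c + 0 * c + c) by apply/funext => y; ring.
by rewrite Krn_affine; ring.
Qed.

Lemma ler_Krn n g h x : (forall y, g y <= h y) -> Kn n g x <= Kn n h x.
Proof.
move=> gh; elim: n x => [|n IH] x /=; first exact: gh.
by apply: ler_sum => z _; apply: ler_wpM2l.
Qed.

Lemma Krn_ge0 n g x : (forall y, 0 <= g y) -> 0 <= Kn n g x.
Proof. by move=> g_ge0; rewrite -(Krn_cst n 0 x); apply: ler_Krn. Qed.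

Lemma KrnSr n g : Kn n.+1 g = Kn n (K g).
Proof. exact: iterSr. Qed.

Lemma sqr_Kr_le g x : K g x ^+ 2 <= K (fun y => g y ^+ 2) x.
Proof. exact: jensen_sqr. Qed.

Lemma sqr_Krn_le n g x : Kn n g x ^+ 2 <= Kn n (fun y => g y ^+ 2) x.
Proof.
elim: n x => [//|n IH] x /=.
by apply: (le_trans (sqr_Kr_le _ x)); apply: ler_sum => z _; apply: ler_wpM2l.
Qed.

Local Notation Gam := (Gamma mul mu s).

Lemma Gamma_ge0 g x : 0 <= Gam g x.
Proof. by rewrite mulr_ge0 ?invr_ge0 ?sumr_ge0 // => z _; rewrite mulr_ge0 ?sqr_ge0. Qed.

Lemma GammaE g x : 2 * Gam g x = K (fun y => (g y - g x) ^+ 2) x.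
Proof. by rewrite /Gamma mulrA divff ?mul1r ?pnatr_eq0. Qed.

Lemma Kr_variance g x :
  K (fun y => g y ^+ 2) x - K g x ^+ 2 = 2 * Gam g x - (K g x - g x) ^+ 2.
Proof.
rewrite GammaE.
have -> : (fun y => (g y - g x) ^+ 2) = (fun y => - (2 * g x) * g y + 1 * g y ^+ 2 + g x ^+ 2).
  by apply/funext => y; ring.
by rewrite Kr_affine; ring.
Qed.

Lemma sqr_Kr_sub_le g x : (K g x - g x) ^+ 2 <= 2 * Gam g x.
Proof. by have := sqr_Kr_le g x; rewrite -subr_ge0 Kr_variance subr_ge0. Qed.

Lemma Krn_drift n g x : Kn n.+1 g x - Kn n g x = Kn n (fun y => K g y - g y) x.
Proof.
have -> : (fun y => K g y - g y) = (fun y => 1 * K g y + (-1) * g y + 0).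
  by apply/funext => y; ring.
by rewrite KrnSr Krn_affine; ring.
Qed.

Lemma sqr_Krn_drift_le n g x : (Kn n.+1 g x - Kn n g x) ^+ 2 <= 2 * Kn n (Gam g) x.
Proof.
rewrite Krn_drift (le_trans (sqr_Krn_le _ _ _)) //.
have -> : 2 * Kn n (Gam g) x = Kn n (fun y => 2 * Gam g y + 0 * Gam g y + 0) x.
  by rewrite Krn_affine; ring.
by apply: ler_Krn => y; rewrite mul0r !addr0 sqr_Kr_sub_le.
Qed.

Lemma Krn_sqr_dev n g c x : Kn n (fun y => (g y - c) ^+ 2) x =
  (Kn n (fun y => g y ^+ 2) x - Kn n g x ^+ 2) + (Kn n g x - c) ^+ 2.
Proof.
have -> : (fun y => (g y - c) ^+ 2) = (fun y => 1 * g y ^+ 2 + - (2 * c) * g y + c ^+ 2).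
  by apply/funext => y; ring.
by rewrite Krn_affine; ring.
Qed.

Lemma Krn_max_sub n g x :
  Kn n (fun y => Num.max (g y) 0) x - Kn n (fun y => Num.max (- g y) 0) x = Kn n g x.
Proof.
have g_split : g = (fun y => 1 * Num.max (g y) 0 + (-1) * Num.max (- g y) 0 + 0).
  by apply/funext => y; have := maxr0_sub_maxNr0 (g y); lra.
by rewrite [in RHS]g_split Krn_affine; ring.
Qed.

Lemma Krn_maxr0_le n g x :
  Kn n (fun y => Num.max (g y) 0) x <= Kn n (fun y => g y ^+ 2) x + 1.
Proof.
apply: (@le_trans _ _ (Kn n (fun y => 1 * g y ^+ 2 + 0 * g y + 1) x)).
  by apply: ler_Krn => y; have := maxr0_le_sqrD1 (g y); lra.
by rewrite Krn_affine; lra.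
Qed.

Lemma Kpow_EFin n g x : Kpow mul mu s n (fun y => (g y)%:E) x = (Kn n g x)%:E.
Proof.
elim: n x => [//|n IH] x /=.
by rewrite -sumEFin; apply: eq_bigr => z _; rewrite IH.
Qed.

Section ConjugationInvariance.
Context {one : G} {inv : G -> G}.
Hypothesis hG : is_group mul one inv.
Hypothesis s_uniq : List.NoDup s.
Hypothesis mu_supp : forall z, mu z <> 0 -> List.In z s.
Hypothesis mu_conj : forall x z, mu (mul (mul x z) (inv x)) = mu z.

Lemma sum_mu_bij (phi : G -> G) (H : G -> R) :
  (forall w, mu (phi w) = mu w) -> bijective phi ->
  \sum_(w <- s) mu w * H (phi w) = \sum_(w <- s) mu w * H w.
Proof.
move=> mu_phi phi_bij; have phi_inj := bij_inj phi_bij.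
rewrite (eq_bigr (fun w => mu (phi w) * H (phi w))) => [|w _]; last by rewrite mu_phi.
rewrite -(big_map phi xpredT (fun v => mu v * H v)).
apply: big_NoDup_support => //; first exact: FinFun.Injective_map_NoDup.
move=> v; rewrite mulf_eq0 negb_or => /andP[/eqP mu_v _]; split; last exact: mu_supp.
case: phi_bij => psi phiK psiK; rewrite -[v]psiK.
by apply: List.in_map; apply: mu_supp; rewrite -mu_phi psiK.
Qed.

Lemma Kr_mulr g x z : K g (mul x z) = \sum_(w <- s) mu w * g (mul (mul x w) z).
Proof.
have [assoc mul1g mulg1 mulVg mulgV] := hG.
rewrite /Kr -[RHS](sum_mu_bij (fun w => mul (mul z w) (inv z))).
- by apply: eq_bigr => w _; rewrite -!assoc mulVg mulg1.
- by move=> w; rewrite mu_conj.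
- exists (fun w => mul (mul (inv z) w) z) => w.
    by rewrite -!assoc mulVg mulg1 !assoc mulVg mul1g.
  by rewrite -!assoc mulgV mulg1 !assoc mulgV mul1g.
Qed.

Lemma Gamma_Kr_le g x : Gam (K g) x <= K (Gam g) x.
Proof.
have jensen_step z : (K g (mul x z) - K g x) ^+ 2 <=
    \sum_(w <- s) mu w * (g (mul (mul x w) z) - g (mul x w)) ^+ 2.
  rewrite Kr_mulr /Kr -sumrB; under eq_bigr do rewrite -mulrBr.
  exact: jensen_sqr.
rewrite -(ler_pM2l (_ : 0 < 2)) // GammaE.
have -> : 2 * K (Gam g) x = \sum_(z <- s) mu z *
    \sum_(w <- s) mu w * (g (mul (mul x w) z) - g (mul x w)) ^+ 2.
  rewrite /Kr mulr_sumr; under [RHS]eq_bigr do rewrite mulr_sumr.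
  rewrite [RHS]exchange_big /=; apply: eq_bigr => w _.
  by rewrite mulrCA GammaE /Kr mulr_sumr; apply: eq_bigr => z _; ring.
by apply: ler_sum => z _; apply: ler_wpM2l.
Qed.

Lemma variance_Krn_le n g x :
  Kn n.+1 (fun y => g y ^+ 2) x - Kn n.+1 g x ^+ 2 <=
  n.+1%:R * (2 * Kn n (Gam g) x - (Kn n.+1 g x - Kn n g x) ^+ 2).
Proof.
elim: n g => [|n IH] g; first by rewrite mul1r /= Kr_variance.
set A := Kn n.+1 (Gam g) x; set D := Kn n.+2 g x - Kn n.+1 g x.
have sqrE : Kn n.+2 (fun y => g y ^+ 2) x = Kn n.+1 (fun y => K g y ^+ 2) x +
    2 * A - Kn n.+1 (fun y => (K g y - g y) ^+ 2) x.
  rewrite KrnSr.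
  have -> : K (fun y => g y ^+ 2) = (fun y => 1 * K g y ^+ 2 +
      1 * (2 * Gam g y + (-1) * (K g y - g y) ^+ 2 + 0) + 0).
    by apply/funext => y; have := Kr_variance g y; lra.
  by rewrite Krn_affine Krn_affine /A; ring.
have IHKr := IH (K g); rewrite -!KrnSr in IHKr.
have GammaA : Kn n (Gam (K g)) x <= A.
  by rewrite /A KrnSr; apply: ler_Krn => y; exact: Gamma_Kr_le.
have sqrD : D ^+ 2 <= Kn n.+1 (fun y => (K g y - g y) ^+ 2) x.
  by rewrite /D Krn_drift; exact: sqr_Krn_le.
have := ler_wpM2l (ler0n R n.+1) GammaA.
rewrite -/D in IHKr; rewrite sqrE -[n.+2%:R]natr1; nra.
Qed.

(** * The chain at a Poisson time *)

Section PoissonChain.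
Context {t : R} {f : G -> R}.
Hypothesis t_ge0 : 0 <= t.

Local Notation p := (poisson t).
Local Notation E := (Enn mul one mu s t).
(* For the walk S started at [one]: b n = E f(S_n), c n = E Gamma f(S_n), V n = Var f(S_n). *)
Let b n := Kn n f one.
Let c n := Kn n (Gam f) one.
Let V n := Kn n (fun y => f y ^+ 2) one - b n ^+ 2.

Lemma Enn_series h : E h = (\sum_(n <oo) (p n * Kn n h one)%:E)%E.
Proof. by apply: eq_eseriesr => n _; rewrite Kpow_EFin -EFinM. Qed.

Lemma Enn_ge0 h : (forall y, 0 <= h y) -> (0 <= E h)%E.
Proof.
move=> h_ge0; rewrite Enn_series; apply: nneseries_ge0 => n _ _.
by rewrite lee_fin mul_poisson_ge0 // Krn_ge0.
Qed.

Let V_ge0 n : 0 <= V n.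
Proof. by rewrite subr_ge0 sqr_Krn_le. Qed.

Let c_ge0 n : 0 <= c n.
Proof. by apply: Krn_ge0 => // y; exact: Gamma_ge0. Qed.

Let drift_le n : (b n.+1 - b n) ^+ 2 <= 2 * c n.
Proof. exact: sqr_Krn_drift_le. Qed.

Lemma within_variance_le :
  (\sum_(n <oo) (p n * V n)%:E <=
   \sum_(n <oo) (t * p n * (2 * c n - (b n.+1 - b n) ^+ 2))%:E)%E.
Proof.
rewrite nneseries_shift => [|n|]; last 2 first.
- by rewrite lee_fin mul_poisson_ge0.
- by rewrite /V /b /= subrr mulr0.
apply: lee_nneseries => n _; first by rewrite lee_fin mul_poisson_ge0.
have V_le : V n.+1 <= n.+1%:R * (2 * c n - (b n.+1 - b n) ^+ 2) by exact: variance_Krn_le.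
have := ler_wpM2l (poisson_ge0 t_ge0 n.+1) V_le.
by rewrite lee_fin -poissonS; lra.
Qed.

Lemma drift_nneseries_le :
  (\sum_(n <oo) (p n * (b n.+1 - b n) ^+ 2)%:E <= 2%:E * E (Gam f))%E.
Proof.
rewrite Enn_series -nneseriesZl => [|n _]; last by rewrite lee_fin mul_poisson_ge0 ?c_ge0.
apply: lee_nneseries => n _; first by rewrite lee_fin mul_poisson_ge0 ?sqr_ge0.
rewrite -EFinM lee_fin [X in _ <= X]mulrCA.
by apply: ler_wpM2l; [exact: poisson_ge0 | exact: drift_le].
Qed.

Lemma total_variance_le :
  (\sum_(n <oo) (p n * V n)%:E + t%:E * \sum_(n <oo) (p n * (b n.+1 - b n) ^+ 2)%:E <=
   (2 * t)%:E * E (Gam f))%E.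
Proof.
have within_ge0 n : 0 <= t * p n * (2 * c n - (b n.+1 - b n) ^+ 2).
  by rewrite mulr_ge0 ?subr_ge0 ?drift_le // mulr_ge0 ?poisson_ge0.
rewrite Enn_series -nneseriesZl => [|n _]; last by rewrite lee_fin mul_poisson_ge0 ?sqr_ge0.
rewrite -nneseriesZl => [|n _]; last by rewrite lee_fin mul_poisson_ge0 ?c_ge0.
apply: le_trans (leeD2r _ within_variance_le) _.
rewrite -nneseriesD => [|n _ _|n _ _]; last 2 first.
- by rewrite lee_fin.
- by rewrite mule_ge0 ?lee_fin ?mul_poisson_ge0 ?sqr_ge0.
apply: lee_nneseries => n _.
  by rewrite adde_ge0 ?mule_ge0 ?lee_fin ?mul_poisson_ge0 ?sqr_ge0.
by rewrite -!EFinM -EFinD lee_fin -/(c n); lra.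
Qed.

Lemma drift_nneseries_lt_pinfty : (E (Gam f) < +oo)%E ->
  (\sum_(n <oo) (p n * (b n.+1 - b n) ^+ 2)%:E < +oo)%E.
Proof. by move=> Gam_fin; apply: le_lt_trans drift_nneseries_le _; rewrite lte_mul_pinfty. Qed.

Lemma Enn_sqr_lt_pinfty : (E (Gam f) < +oo)%E -> (E (fun y => (f y ^+ 2)%R) < +oo)%E.
Proof.
move=> Gam_fin; have drift_fin := drift_nneseries_lt_pinfty Gam_fin.
have within_fin : (\sum_(n <oo) (p n * V n)%:E < +oo)%E.
  apply: le_lt_trans (le_trans _ total_variance_le) _.
    rewrite leeDl // mule_ge0 ?lee_fin // nneseries_ge0 // => n _ _.
    by rewrite lee_fin mul_poisson_ge0 ?sqr_ge0.
  by rewrite lte_mul_pinfty // lee_fin mulr_ge0.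
have -> : E (fun y => f y ^+ 2) = (\sum_(n <oo) ((p n * V n)%:E + (p n * b n ^+ 2)%:E))%E.
  by rewrite Enn_series; apply: eq_eseriesr => n _; rewrite -EFinD -mulrDr /V subrK.
rewrite nneseriesD => [|n _ _|n _ _]; last 2 first.
- by rewrite lee_fin mul_poisson_ge0.
- by rewrite lee_fin mul_poisson_ge0 ?sqr_ge0.
by rewrite lte_add_pinfty //; exact: poisson_sqr_summable.
Qed.

Lemma Enn_maxr0_lt_pinfty g : (E (fun y => (g y ^+ 2)%R) < +oo)%E ->
  (E (fun y => Num.max (g y) 0%R) < +oo)%E.
Proof.
move=> sqr_fin; apply: (@le_lt_trans _ _ (E (fun y => (g y ^+ 2)%R) + 1%:E)%E).
  rewrite !Enn_series -(nneseries_poisson t_ge0) -nneseriesD => [|n _ _|n _ _]; last 2 first.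
  - by rewrite lee_fin mul_poisson_ge0 // Krn_ge0 // => y; rewrite sqr_ge0.
  - by rewrite lee_fin poisson_ge0.
  apply: lee_nneseries => n _.
    by rewrite lee_fin mul_poisson_ge0 // Krn_ge0 // => y; rewrite le_max lexx orbT.
  rewrite -EFinD lee_fin -[X in _ <= _ + X]mulr1 -mulrDr.
  by apply: ler_wpM2l; [exact: poisson_ge0 | exact: Krn_maxr0_le].
by rewrite lte_add_pinfty ?ltry.
Qed.

Lemma cvg_series_Esgn : (E (fun y => (f y ^+ 2)%R) < +oo)%E ->
  series (fun n => p n * b n) @ \oo --> Esgn mul one mu s t f.
Proof.
move=> sqr_fin.
have part_lim g : (E (fun y => (g y ^+ 2)%R) < +oo)%E ->
    series (fun n => p n * Kn n (fun y => Num.max (g y) 0) one) @ \oo -->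
    fine (E (fun y => Num.max (g y) 0)).
  move=> g_fin; rewrite Enn_series; apply: cvg_series_fine; last first.
    by rewrite -Enn_series; exact: Enn_maxr0_lt_pinfty.
  by move=> n; rewrite mul_poisson_ge0 // Krn_ge0 // => y; rewrite le_max lexx orbT.
have neg_fin : (E (fun y => ((- f y) ^+ 2)%R) < +oo)%E.
  by under eq_fun do rewrite sqrrN.
have -> : Esgn mul one mu s t f = 1 * fine (E (fun y => Num.max (f y) 0)) +
    (-1) * fine (E (fun y => Num.max (- f y) 0)) by rewrite /Esgn; ring.
have -> : (fun n => p n * b n) = (fun n => 1 * (p n * Kn n (fun y => Num.max (f y) 0) one) +
    (-1) * (p n * Kn n (fun y => Num.max (- f y) 0) one)).
  by apply/funext => n; rewrite /b -Krn_max_sub; ring.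
exact: cvg_series_lincomb (part_lim f sqr_fin) (part_lim (fun y => - f y) neg_fin).
Qed.

Lemma Var_le_Gamma : (E (Gam f) < +oo)%E ->
  Var mul one mu s t f <= 2 * t * fine (E (Gam f)).
Proof.
move=> Gam_fin; have sqr_fin := Enn_sqr_lt_pinfty Gam_fin.
rewrite /Var; set m := Esgn mul one mu s t f.
have between : (\sum_(n <oo) (p n * (b n - m) ^+ 2)%:E <=
    t%:E * \sum_(n <oo) (p n * (b n.+1 - b n) ^+ 2)%:E)%E.
  have <- : limn (series (fun n => p n * b n)) = m.
    by apply: cvg_lim => //; exact: cvg_series_Esgn.
  apply: poisson_variance_le => //; apply: poisson_sqr_summable => //.
  exact: drift_nneseries_lt_pinfty.
have dev_le : (E (fun x => ((f x - m) ^+ 2)%R) <= (2 * t)%:E * E (Gam f))%E.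
  apply: le_trans (le_trans (leeD2l _ between) total_variance_le).
  rewrite Enn_series -nneseriesD => [|n _ _|n _ _]; last 2 first.
  - by rewrite lee_fin mul_poisson_ge0.
  - by rewrite lee_fin mul_poisson_ge0 ?sqr_ge0.
  apply: lee_nneseries => n _.
    by rewrite lee_fin mul_poisson_ge0 // Krn_ge0 // => y; exact: sqr_ge0.
  by rewrite Krn_sqr_dev -EFinD mulrDr.
have Gam_fin_num : E (Gam f) \is a fin_num.
  by rewrite ge0_fin_numE ?Enn_ge0 // => y; exact: Gamma_ge0.
have bound_fin_num : ((2 * t)%:E * E (Gam f))%E \is a fin_num by rewrite fin_numM.
have dev_fin_num : E (fun x => ((f x - m) ^+ 2)%R) \is a fin_num.
  rewrite ge0_fin_numE; last by apply: Enn_ge0 => y; exact: sqr_ge0.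
  by apply: le_lt_trans dev_le _; rewrite ltey_eq bound_fin_num.
by rewrite -[2 * t]/(fine (2 * t)%:E) -fineM //; apply: fine_le.
Qed.

End PoissonChain.
End ConjugationInvariance.
End MarkovOperator.

Local Close Scope classical_set_scope.

Theorem corollary3 (R : realType) (G : Type) (mul : G -> G -> G) (one : G)
  (inv : G -> G) (hG : is_group mul one inv)
  (mu : G -> R) (s : seq G)
  (mu_ge0 : forall z, 0 <= mu z)
  (s_uniq : List.NoDup s)
  (mu_supp : forall z, mu z <> 0 -> List.In z s)
  (mu_sum1 : \sum_(z <- s) mu z = 1)
  (A1 : forall x z, mu (mul (mul x z) (inv x)) = mu z)
  (A2 : forall z, mu (inv z) = mu z)
  (f : G -> R) (t : R) (ht : 0 <= t) :
  (Enn mul one mu s t (Gamma mul mu s f) < +oo)%E ->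
  (Enn mul one mu s t (fun x => (f x ^+ 2)%R) < +oo)%E /\
  Var mul one mu s t f <= 2 * t * fine (Enn mul one mu s t (Gamma mul mu s f)).
Proof.
move=> Gamma_fin; split.
- exact: (Enn_sqr_lt_pinfty mu_ge0 mu_sum1 hG s_uniq mu_supp A1 ht Gamma_fin).
- exact: (Var_le_Gamma mu_ge0 mu_sum1 hG s_uniq mu_supp A1 ht Gamma_fin).
Qed.
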